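(* Let $a,b,k,\ell$ be positive integers with $\gcd(a,b)=1$. The number of pairs of integers $(\alpha,\beta)$ with $0\le\alpha<k$, $0\le\beta<\ell$ and $\gcd(k,\ell,a\beta-b\alpha)=1$ equals $$k\ell\,\frac{\varphi(\gcd(k,\ell))}{\gcd(k,\ell)},$$ where $\varphi$ is Euler's totient function. *)

From mathcomp Require Import all_boot all_order all_algebra.
Set Implicit Arguments. Unset Strict Implicit. Unset Printing Implicit Defensive.

(* Let g = gcd(k, l).  The condition gcd(k, l, a*beta - b*alpha) = 1 only
   depends on alpha and beta modulo g, so the count is (k/g)(l/g) times the
   number N(g) of residue pairs (x, y) in (Z/g)^2 with a*y - b*x a unit mod g.
   Since gcd(a, b) = 1, Bezout gives u, v with u*a + v*b = 1, so the integer
   matrix ((u, v), (-b, a)) has determinant 1 and induces a bijection of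
   (Z/g)^2 sending (x, y) to (u*x + v*y, a*y - b*x).  Hence N(g) counts the
   pairs (s, t) with t a unit mod g, i.e. N(g) = g * phi(g), and the count is
   (k/g)(l/g) * g * phi(g) = k * l * phi(g) / g. *)
From mathcomp Require Import all_boot all_order all_algebra.
From mathcomp Require Import ring.
Import GRing.Theory Num.Theory.

Lemma sum_periodic (g n : nat) (f : nat -> nat) : 0 < g -> g %| n ->
  \sum_(i < n) f (i %% g) = n %/ g * \sum_(i < g) f i.
Proof.
move=> g_gt0 /dvdnP [m ->]; rewrite mulnK //.
rewrite -(big_mkord xpredT (fun i => f (i %% g))) -(big_mkord xpredT f).
elim: m => [|m IHm]; first by rewrite !mul0n big_geq.
rewrite mulSn (big_cat_nat _ (n := g)) ?leq_addr //= (big_addn 0 _ g) addKn.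
under [in X in _ + X]eq_bigr do rewrite modnDr.
rewrite {}IHm mulSn; congr (_ + _).
by apply: eq_big_nat => i /andP[_ lt_ig]; rewrite modn_small.
Qed.

Section Residues.

Variable n : nat.
Local Notation g := n.+1.
Local Open Scope ring_scope.

Definition zres (z : int) : 'I_g := inord `|(z %% g)%Z|%N.

Lemma zresE (z : int) : (zres z)%:Z = (z %% g)%Z.
Proof.
have mod_ge0 : 0 <= (z %% g)%Z by apply: modz_ge0.
have mod_lt : (z %% g)%Z < g%:Z by apply: ltz_pmod.
rewrite inordK ?gez0_abs // -ltz_nat gez0_abs //.
Qed.

Lemma zres_eq (z z' : int) : (zres z == zres z') = (z == z' %[mod g])%Z.
Proof. by rewrite -!zresE eqz_nat. Qed.

Lemma zres_ord (x : 'I_g) : zres x%:Z = x.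
Proof. by apply: val_inj; rewrite /zres /= modz_nat absz_nat modn_small // inordK. Qed.

Lemma coprime_zres (z : int) : coprime g (zres z) = coprime g `|z|%N.
Proof.
have := gcdz_modr g z; rewrite -zresE /gcdz !absz_nat.
by rewrite /coprime => -[->].
Qed.

Lemma unimodular_zres_inj (p q r s : int) : p * s - q * r = 1 ->
  injective (fun xy : 'I_g * 'I_g =>
    (zres (p * xy.1%:Z + q * xy.2%:Z), zres (r * xy.1%:Z + s * xy.2%:Z))).
Proof.
move=> det [x y] [x' y'] [/eqP + /eqP]; rewrite !zres_eq !eqz_mod_dvd /= => d1 d2.
have ex : x%:Z - x'%:Z = s * (p * x + q * y - (p * x' + q * y'))
                          - q * (r * x + s * y - (r * x' + s * y')).
  by rewrite -[LHS]mul1r -det; ring.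
have ey : y%:Z - y'%:Z = p * (r * x + s * y - (r * x' + s * y'))
                          - r * (p * x + q * y - (p * x' + q * y')).
  by rewrite -[LHS]mul1r -det; ring.
have eq_res (t t' : 'I_g) : (g%:Z %| t%:Z - t'%:Z)%Z -> t = t'.
  by move=> dt; rewrite -[t]zres_ord -[t']zres_ord; apply/eqP; rewrite zres_eq eqz_mod_dvd.
congr (_, _); apply: eq_res.
- by rewrite ex rpredB // dvdz_mull.
- by rewrite ey rpredB // dvdz_mull.
Qed.

Lemma count_coprime_forms (a b : int) : coprimez a b ->
  (\sum_(x < g) \sum_(y < g) (coprime g `|(a * y%:Z - b * x%:Z)%R|%N : nat)
   = g * totient g)%N.
Proof.
move=> /eqP coprime_ab; have [u [v bezout]] := Bezoutz a b.
rewrite coprime_ab in bezout.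
pose h (xy : 'I_g * 'I_g) :=
  (zres (u * xy.1%:Z + v * xy.2%:Z), zres (- b * xy.1%:Z + a * xy.2%:Z)).
have h_inj : injective h.
  by apply: unimodular_zres_inj; rewrite -bezout; ring.
rewrite pair_big /= (eq_bigr (fun xy => coprime g (h xy).2 : nat)); last first.
  by move=> [x y] _; rewrite /= coprime_zres addrC mulNr.
rewrite -(reindex_inj h_inj (P := xpredT) (F := fun st : 'I_g * 'I_g => coprime g st.2 : nat)).
rewrite -(pair_big xpredT xpredT (fun _ t : 'I_g => coprime g t : nat)) /=.
by rewrite sum_nat_const card_ord totient_count_coprime big_mkord.
Qed.

Lemma coprime_form_mod (a b : int) (x y : nat) :
  coprime g `|(a * y%:Z - b * x%:Z)%R|%N
  = coprime g `|(a * (y %% g)%:Z - b * (x %% g)%:Z)%R|%N.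
Proof.
rewrite -!coprime_zres; congr (coprime _ (nat_of_ord _)); apply/eqP; rewrite zres_eq.
rewrite {1}(divn_eq x g) {1}(divn_eq y g) !PoszD !PoszM.
have -> : (a * ((y %/ g)%:Z * g%:Z + (y %% g)%:Z)
             - b * ((x %/ g)%:Z * g%:Z + (x %% g)%:Z)
           = (a * (y %/ g)%:Z - b * (x %/ g)%:Z) * g%:Z
             + (a * (y %% g)%:Z - b * (x %% g)%:Z))%R by ring.
by rewrite modzMDl.
Qed.

End Residues.

Theorem mainTheorem17 (a b k l : nat) (ha : 0 < a) (hb : 0 < b)
    (hk : 0 < k) (hl : 0 < l) (hab : coprime a b) :
  #|[set p : 'I_k * 'I_l |
      gcdn (gcdn k l) `|((a * p.2)%N%:Z - (b * p.1)%N%:Z)%R|%N == 1]|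
  = k * l * totient (gcdn k l) %/ gcdn k l.
Proof.
have [dvd_gk dvd_gl] := (dvdn_gcdl k l, dvdn_gcdr k l).
have [n gE] : exists n, gcdn k l = n.+1.
  by exists (gcdn k l).-1; rewrite prednK // gcdn_gt0 hk.
rewrite gE in dvd_gk dvd_gl *.
pose F (x y : nat) := (coprime n.+1 `|(a%:Z * y%:Z - b%:Z * x%:Z)%R|%N : nat).
have -> : #|[set p : 'I_k * 'I_l |
      gcdn n.+1 `|((a * p.2)%N%:Z - (b * p.1)%N%:Z)%R|%N == 1]|
    = \sum_(i < k) \sum_(j < l) F i j.
  rewrite pair_big /= -sum1_card big_mkcond /=; apply: eq_bigr => p _.
  by rewrite inE /F /coprime !PoszM; case: (_ == 1).
have F_mod x y : F x y = F (x %% n.+1) (y %% n.+1) by rewrite /F coprime_form_mod.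
under eq_bigr => i _.
  under eq_bigr do rewrite F_mod.
  rewrite (@sum_periodic _ _ (fun y => F (i %% n.+1) y)) //.
over.
rewrite (@sum_periodic _ _ (fun x => l %/ n.+1 * \sum_(y < n.+1) F x y)) //.
rewrite -big_distrr /= count_coprime_forms ?coprimezE //.
have -> : k * l * totient n.+1
    = k %/ n.+1 * (l %/ n.+1 * (n.+1 * totient n.+1)) * n.+1.
  by rewrite -{1}(divnK dvd_gk) -{1}(divnK dvd_gl); ring.
by rewrite mulnK.
Qed.
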